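(* Let $n\geq 1$ and let $I$ be a nonempty subset of $[n]$. Then $PC^-_I=\bigcap_{i\in I}PC^-_{\{i\}}$ and $NC^-_I=\bigcap_{i\in I}NC^-_{\{i\}}$.
   Context: Boolean functions on $n$ variables are maps $f:\{0,1\}^n\to\{0,1\}$, variables indexed by $[n]=\{0,\dots,n-1\}$. For a nonempty $I\subseteq[n]$, $f$ is positively canalizing on $I$ if there is a function $\sigma:I\to\{0,1\}$ such that for all $x\in\{0,1\}^n$, if there exists $i\in I$ with $x_i\neq\sigma(i)$ then $f(x)=1$; negatively canalizing on $I$ is defined the same way with $f(x)=0$ in place of $f(x)=1$. $PC^-_I$ (resp. $NC^-_I$) is the set of nonconstant Boolean functions on $n$ variables that are positively (resp. negatively) canalizing on $I$. *)

From mathcomp Require Import all_boot.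
Set Implicit Arguments. Unset Strict Implicit. Unset Printing Implicit Defensive.

Definition boolfun (n : nat) := {ffun 'I_n -> bool} -> bool.

Definition nonconstant n (f : boolfun n) : Prop := exists x y, f x <> f y.

(* f is canalizing on I with output b: there is sigma : I -> {0,1}
   (represented as a function on 'I_n, only its values on I matter) such that
   whenever some i in I has x_i <> sigma i, f x = b. *)
Definition canalizing_on n (I : {set 'I_n}) (b : bool) (f : boolfun n) : Prop :=
  exists sigma : 'I_n -> bool,
    forall x : {ffun 'I_n -> bool},
      (exists2 i, i \in I & x i <> sigma i) -> f x = b.

Definition pos_canalizing_on n (I : {set 'I_n}) f := canalizing_on I true f.
Definition neg_canalizing_on n (I : {set 'I_n}) f := canalizing_on I false f.

Definition PCm n (I : {set 'I_n}) (f : boolfun n) : Prop :=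
  nonconstant f /\ pos_canalizing_on I f.
Definition NCm n (I : {set 'I_n}) (f : boolfun n) : Prop :=
  nonconstant f /\ neg_canalizing_on I f.

(* If f is nonconstant, some input y has f y <> b.  Any sigma witnessing
   canalization of f on {i} with output b must then agree with y at i, since
   otherwise f y = b.  Hence y itself is a witness for every {i} at once, and
   so for all of I. *)

From mathcomp Require Import all_boot.

Section Canalizing.

Variables (n : nat) (b : bool) (f : boolfun n).

Lemma nonconstant_exists_neq : nonconstant f -> exists y, f y <> b.
Proof.
case=> x [z fxz]; case: (eqVneq (f x) b) => [fxb | /eqP]; last by exists x.
by exists z; rewrite -fxb => fzx; apply: fxz.
Qed.

Lemma canalizing_onS (I J : {set 'I_n}) :
  J \subset I -> canalizing_on I b f -> canalizing_on J b f.
Proof.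
move=> /subsetP sJI [sigma canal]; exists sigma => x [i iJ xi].
by apply: canal; exists i; first exact: sJI.
Qed.

Lemma canalizing_on_set1_at (y : {ffun 'I_n -> bool}) (i : 'I_n) :
  f y <> b -> canalizing_on [set i] b f ->
  forall x : {ffun 'I_n -> bool}, x i <> y i -> f x = b.
Proof.
move=> fyb [sigma canal] x xyi.
have yi : y i = sigma i.
  case: (eqVneq (y i) (sigma i)) => // /eqP yi; case: fyb; apply: canal.
  by exists i; rewrite ?set11.
by apply: canal; exists i; rewrite ?set11 -?yi.
Qed.

Lemma canalizing_on_of_set1 (I : {set 'I_n}) (y : {ffun 'I_n -> bool}) :
  f y <> b -> (forall i, i \in I -> canalizing_on [set i] b f) ->
  canalizing_on I b f.
Proof.
move=> fyb canal1; exists y => x [i iI xyi].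
exact: canalizing_on_set1_at fyb (canal1 i iI) x xyi.
Qed.

Lemma nonconstant_canalizing_onE (I : {set 'I_n}) : I != set0 ->
  (nonconstant f /\ canalizing_on I b f) <->
  (forall i, i \in I -> nonconstant f /\ canalizing_on [set i] b f).
Proof.
case/set0Pn=> i0 i0I; split.
  move=> [nc canal] i iI; split => //.
  by apply: canalizing_onS canal; rewrite sub1set.
move=> canal1; have [nc _] := canal1 i0 i0I; split => //.
have [y fyb] := nonconstant_exists_neq nc.
by apply: canalizing_on_of_set1 fyb _ => i /canal1 [].
Qed.

End Canalizing.

Theorem mainTheorem5 (n : nat) (I : {set 'I_n}) :
  1 <= n -> I != set0 ->
  (forall f : boolfun n, PCm I f <-> (forall i, i \in I -> PCm [set i] f)) /\
  (forall f : boolfun n, NCm I f <-> (forall i, i \in I -> NCm [set i] f)).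
Proof.
by move=> _ I0; split=> f; apply: nonconstant_canalizing_onE.
Qed.
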